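(* Let $d\in\mathbb{N}$, $d>1$, and write $a:=\lceil\log_2d\rceil$. For any $0<\epsilon\le\frac{3^{a}-1}{3^{a-1}-1}$ (read as $+\infty$ when $3^{a-1}-1=0$), there exists a ReLU FNN function $f^{(mtp)}_{FF,d}:\mathbb{R}^d\to\mathbb{R}$ with width $21\cdot2^{a-1}$, depth $C\ln\frac{3^{a}-1}{2\epsilon}$ and weight bound $C$, where $C$ is a constant independent of $\epsilon$, such that for all $\boldsymbol x\in[0,1]^d$, $$|f^{(mtp)}_{FF,d}(\boldsymbol x)-x_1\cdots x_d|\le\epsilon.$$
   Context: ReLU FNN of depth $L$, width $W$: $f_0=x$, $f_l=\sigma_R(W_lf_{l-1}+b_l)$ ($1\le l\le L-1$), $f=W_Lf_{L-1}+b_L$ with hidden layers of width $W$, $\sigma_R(x)=\max\{x,0\}$; the weight bound is the maximum absolute value of all weights and biases. *)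

From HB Require Import structures.
From mathcomp Require Import all_boot all_order all_algebra.
From mathcomp Require Import all_classical all_reals all_analysis.
Set Implicit Arguments. Unset Strict Implicit. Unset Printing Implicit Defensive.
Import Order.TTheory GRing.Theory Num.Theory.
Local Open Scope ring_scope.

Definition relu {R : realType} (t : R) : R := Num.max t 0.

(* Layer widths of a ReLU FNN with input dimension d, hidden width W and
   depth L (L affine maps): layer 0 = input (dim d), layers 1..L-1 hidden
   (dim W), layer L = output (dim 1). *)
Definition layer_dim (d W L l : nat) : nat :=
  if l == 0%N then d else if (l < L)%N then W else 1%N.

(* Weights:  w l i j = entry (i,j) of W_l,  b l i = entry i of b_l  (1 <= l <= L).
   Only the entries with i < layer_dim l, j < layer_dim (l-1) are used. *)
Fixpoint fnn_hidden {R : realType} (d W L : nat)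
  (w : nat -> nat -> nat -> R) (b : nat -> nat -> R) (x : nat -> R) (l : nat)
  : nat -> R :=
  match l with
  | 0%N => x
  | l'.+1 => fun i =>
      relu (\sum_(j < layer_dim d W L l') w l'.+1 i j * fnn_hidden d W L w b x l' j
            + b l'.+1 i)
  end.

Definition fnn_eval {R : realType} (d W L : nat)
  (w : nat -> nat -> nat -> R) (b : nat -> nat -> R) (x : nat -> R) : R :=
  \sum_(j < layer_dim d W L L.-1) w L 0%N j * fnn_hidden d W L w b x L.-1 j
  + b L 0%N.

Definition fnn_weight_bounded {R : realType} (d W L : nat)
  (w : nat -> nat -> nat -> R) (b : nat -> nat -> R) (B : R) : Prop :=
  forall l, (1 <= l <= L)%N -> forall i, (i < layer_dim d W L l)%N ->
    `|b l i| <= B /\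
    forall j, (j < layer_dim d W L l.-1)%N -> `|w l i j| <= B.

(* a = ceil(log_2 d): smallest e with d <= 2^e *)
Definition mtp_a (d : nat) : nat := up_log 2 d.

From HB Require Import structures.
From mathcomp Require Import all_boot all_order all_algebra.
From mathcomp Require Import all_classical all_reals all_analysis.
From mathcomp Require Import ring lra zify.
Import Order.TTheory GRing.Theory Num.Theory.
Local Open Scope ring_scope.
Set Implicit Arguments. Unset Strict Implicit. Unset Printing Implicit Defensive.

(* Yarotsky's construction. On [0, 1] the hat map satisfies
   [4 t (1 - t) = hat t + hat t (1 - hat t)], so
   [z - sum_(1 <= s <= n) hat^s z / 4^s] approximates [z^2] within [4^-(n+1)].
   Polarization [c y = 2 ((c + y) / 2)^2 - (c^2 + y^2) / 2] turns this into an
   approximate product with error [2 4^-(m+1)]. Multiplying the factors in one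
   at a time, and clipping the running product back into [0, 1] with
   [relu p - relu (p - 1)] (which keeps it where that estimate holds and never
   increases its error), gives the product of [d] factors within
   [(d - 1) 2 4^-(m+1)]. Every step is computed exactly by ReLU layers using
   [d + 9] neurons (the others stay idle), so choosing [2^m] of order [d / eps]
   yields depth [O (d (ln d + ln (1 / eps)))] with weights bounded by [7]: the
   constant depends on [d] but not on [eps]. *)

Definition hat {R : realType} (t : R) : R := 2 * relu t - 4 * relu (t - 1/2).

Section SawtoothProduct.
Variable R : realType.
Implicit Types (t z c y p P : R) (n k : nat).

Lemma ger0_relu t : 0 <= t -> relu t = t.
Proof. by move=> t0; rewrite /relu max_l. Qed.

Lemma ler0_relu t : t <= 0 -> relu t = 0.
Proof. by move=> t0; rewrite /relu max_r. Qed.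

Lemma hatE t : 0 <= t <= 1 ->
  (t <= 1/2 /\ hat t = 2 * t) \/ (1/2 <= t /\ hat t = 2 - 2 * t).
Proof.
move=> /andP[t0 t1]; rewrite /hat ger0_relu //.
have [th|th] := lerP t (1/2).
  by left; rewrite ler0_relu ?subr_le0 //; split => //; lra.
by right; rewrite ger0_relu; [split; lra | lra].
Qed.

Lemma hat_in01 t : 0 <= t <= 1 -> 0 <= hat t <= 1.
Proof.
by move=> t01; have [] := hatE t01 => -[? ->]; case/andP: t01 => ? ?; apply/andP; split; lra.
Qed.

Lemma iter_hat_in01 n z : 0 <= z <= 1 -> 0 <= iter n hat z <= 1.
Proof. by move=> z01; elim: n => //= n; apply: hat_in01. Qed.

Definition parab t : R := t * (1 - t).

Lemma parab_bounds t : 0 <= t <= 1 -> 0 <= parab t <= 1/4.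
Proof.
move=> /andP[t0 t1]; have := sqr_ge0 (t - 1/2); rewrite /parab expr2 => ?.
by apply/andP; split; nra.
Qed.

Lemma parab_hat t : 0 <= t <= 1 -> 4 * parab t = hat t + parab (hat t).
Proof. by move=> t01; rewrite /parab; have [] := hatE t01 => -[_ ->]; ring. Qed.

Fixpoint sq_approx n z : R :=
  if n is n'.+1 then sq_approx n' z - iter n hat z / 4 ^+ n else z.

Lemma sq_approxE n z : 0 <= z <= 1 ->
  sq_approx n z = z ^+ 2 + parab (iter n hat z) / 4 ^+ n.
Proof.
move=> z01; elim: n => [|n IH] /=; first by rewrite /parab expr0 divr1; ring.
have /parab_hat e := iter_hat_in01 n z01.
have : (4 : R) ^+ n != 0 by rewrite expf_neq0 // pnatr_eq0.
rewrite IH [(4 : R) ^+ n.+1]exprS; move: e.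
set u := iter n hat z; set v := (4 : R) ^+ n => e v0.
have -> : parab (hat u) = 4 * parab u - hat u by rewrite e; ring.
by field.
Qed.

Lemma sq_approx_err n z : 0 <= z <= 1 -> 0 <= sq_approx n z - z ^+ 2 <= (4 ^+ n.+1)^-1.
Proof.
move=> z01; rewrite sq_approxE // addrC addKr.
have /andP[q0 q1] := parab_bounds (iter_hat_in01 n z01).
have p4 : 0 < (4 : R) ^+ n by rewrite exprn_gt0.
by rewrite divr_ge0 ?(ltW p4) //= ler_pdivrMr // exprSr invfM mulrAC mulVf ?gt_eqF.
Qed.

Definition polarize (g : R -> R) c y : R := 2 * g ((c + y) / 2) - (g c + g y) / 2.

Lemma polarize_err (g : R -> R) (e : R) c y :
  (forall z, 0 <= z <= 1 -> 0 <= g z - z ^+ 2 <= e) ->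
  0 <= c <= 1 -> 0 <= y <= 1 -> `|polarize g c y - c * y| <= 2 * e.
Proof.
move=> g_err c01 y01.
have m01 : 0 <= (c + y) / 2 <= 1.
  by case/andP: c01 => ? ?; case/andP: y01 => ? ?; apply/andP; split; lra.
have -> : polarize g c y - c * y = 2 * (g ((c + y) / 2) - ((c + y) / 2) ^+ 2)
    - ((g c - c ^+ 2) + (g y - y ^+ 2)) / 2 by rewrite /polarize; field.
move: (g_err _ m01) (g_err _ c01) (g_err _ y01).
move: (g _ - _) (g c - _) (g y - _) => a b b' /andP[? ?] /andP[? ?] /andP[? ?].
by rewrite ler_norml; apply/andP; split; lra.
Qed.

Definition clip01 p : R := relu p - relu (p - 1).

Lemma clip01_in01 p : 0 <= clip01 p <= 1.
Proof.
rewrite /clip01; have [p0|p0] := lerP p 0.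
  by rewrite !ler0_relu ?subr0 ?lexx ?ler01 //; lra.
rewrite ger0_relu ?(ltW p0) //; have [p1|p1] := lerP p 1.
  by rewrite ler0_relu ?subr0; [apply/andP; split; lra | lra].
by rewrite ger0_relu; [apply/andP; split; lra | lra].
Qed.

Lemma dist_clip01 p P : 0 <= P <= 1 -> `|clip01 p - P| <= `|p - P|.
Proof.
move=> /andP[P0 P1]; rewrite /clip01; have [p0|p0] := lerP p 0.
  rewrite (ler0_relu p0) ler0_relu; last lra.
  by rewrite subr0 sub0r normrN (ger0_norm P0) ler0_norm; lra.
rewrite ger0_relu ?(ltW p0) //; have [p1|p1] := lerP p 1.
  by rewrite ler0_relu ?subr0; lra.
rewrite ger0_relu; last lra.
by rewrite !ger0_norm; lra.
Qed.

Fixpoint prod_approx (mul : R -> R -> R) (x : nat -> R) k : R :=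
  if k is k'.+1 then mul (clip01 (prod_approx mul x k')) (x k) else x 0%N.

Lemma prod_approx_err (mul : R -> R -> R) (e : R) (x : nat -> R) k :
  (forall c y, 0 <= c <= 1 -> 0 <= y <= 1 -> `|mul c y - c * y| <= e) ->
  (forall i, (i <= k)%N -> 0 <= x i <= 1) ->
  `|clip01 (prod_approx mul x k) - \prod_(i < k.+1) x i| <= k%:R * e.
Proof.
move=> mul_err; elim: k => [|k IH] x01.
  by rewrite big_ord1 mul0r; have := dist_clip01 (x 0%N) (x01 0%N isT); rewrite subrr normr0.
rewrite big_ord_recr /=; set P := \prod_(i < k.+1) x i.
have P01 : 0 <= P <= 1.
  have xi01 (i : 'I_k.+1) : 0 <= x i <= 1 by apply: x01; exact: ltnW.
  apply/andP; split; [apply: prodr_ge0 | apply: prodr_ile1] => i _.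
    by case/andP: (xi01 i).
  exact: xi01.
have xk01 := x01 k.+1 (leqnn _); have /andP[xk0 xk1] := xk01.
have Px01 : 0 <= P * x k.+1 <= 1.
  by case/andP: P01 => ? ?; apply/andP; split; nra.
apply: le_trans (dist_clip01 _ Px01) _.
have := IH (fun i ik => x01 i (leqW ik)).
have := mul_err _ _ (clip01_in01 (prod_approx mul x k)) xk01.
move: (clip01 _) => c cerr IHc.
rewrite (_ : mul c _ - _ = (c - P) * x k.+1 + (mul c (x k.+1) - c * x k.+1)); last by ring.
apply: le_trans (ler_normD _ _) _; rewrite -natr1 [_ * e]mulrDl mul1r lerD //.
rewrite normrM (ger0_norm xk0); apply: le_trans IHc.
by rewrite ler_piMr.
Qed.

End SawtoothProduct.

Definition sparse (R : pzSemiRingType) (s : seq (nat * R)) (j : nat) : R :=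
  \sum_(p <- s) (if p.1 == j then p.2 else 0).

Lemma sum_sparse (R : pzSemiRingType) (s : seq (nat * R)) n (h : nat -> R) :
  all (fun p => p.1 < n)%N s ->
  \sum_(j < n) sparse s j * h j = \sum_(p <- s) p.2 * h p.1.
Proof.
elim: s => [_|p s IH /andP[pn sn]].
  by rewrite big_nil big1 // => j _; rewrite /sparse big_nil mul0r.
under eq_bigr do rewrite /sparse big_cons mulrDl.
rewrite big_split /= IH // big_cons (bigD1 (Ordinal pn)) //= eqxx big1 ?addr0 // => j jp.
case: eqP => [pj|]; last by rewrite mul0r.
by move: jp; rewrite -(inj_eq val_inj) /= pj eqxx.
Qed.

Section Network.
Variable R : realType.
Variables (d m W : nat).
Hypothesis d_gt1 : (1 < d)%N.
Hypothesis W_ge : (d + 9 <= W)%N.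

(* Factor [k.+1] is multiplied in during the [block] layers following layer
   [k * block]: one layer clipping the running product [p_k], then [m.+1]
   layers running three copies of [sq_approx] in parallel. Neurons [i < d]
   carry the input, neurons [d], [d.+1] hold [relu p_k], [relu (p_k - 1)], and
   [chan c e] holds role [e] of squaring channel [c] (see [chan_input] and
   [role_value] below). [net_row l i] lists the nonzero weights into neuron [i]
   of layer [l] as (source neuron, weight) pairs, together with its bias. *)
Definition block := m.+2.
Definition depth := (d.-1 * block).+2.
Definition chan (c e : nat) := (d + c * 3 + e)%N.

Definition prod_src (k : nat) : seq (nat * R) :=
  if k is 0 then [:: (0%N, 1)]
  else [:: (chan 0 2, 2); (chan 1 2, -(1/2)); (chan 2 2, -(1/2))].

Definition chan_src (k c : nat) : seq (nat * R) :=
  match c with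
  | 0 => [:: (d, 1/2); (d.+1, -(1/2)); (k.+1, 1/2)]
  | 1 => [:: (d, 1); (d.+1, -1)]
  | _ => [:: (k.+1, 1)]
  end.

(* Role 0 already holds [relu u = u] for [u = hat^(s-1) z], and
   [hat u = 2 relu u - 4 relu (u - 1/2)]. *)
Definition sq_src (s c e : nat) : seq (nat * R) :=
  if e == 2%N then [:: (chan c 2, 1); (chan c 0, -(2 / 4 ^+ s)); (chan c 1, 4 / 4 ^+ s)]
  else [:: (chan c 0, 2); (chan c 1, -4)].

Definition role_bias (e : nat) : R := if e == 1%N then -(1/2) else 0.

Definition net_row (l i : nat) : seq (nat * R) * R :=
  if l == depth then (if i == 0%N then [:: (d, 1); (d.+1, -1)] else [::], 0)
  else if (i < d)%N then ([:: (i, 1)], 0)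
  else let k := (l.-1 %/ block)%N in let j := (l.-1 %% block)%N in
  if j == 0%N then
    if i == d then (prod_src k, 0) else if i == d.+1 then (prod_src k, -1) else ([::], 0)
  else let c := ((i - d) %/ 3)%N in let e := ((i - d) %% 3)%N in
    if (c < 3)%N then (if j == 1%N then chan_src k c else sq_src j.-1 c e, role_bias e)
    else ([::], 0).

Definition net_w (l i j : nat) : R := sparse (net_row l i).1 j.
Definition net_b (l i : nat) : R := (net_row l i).2.

Lemma layer_dim_hidden l : (0 < l < depth)%N -> layer_dim d W depth l = W.
Proof. by case/andP=> l0 ld; rewrite /layer_dim gtn_eqF // ld. Qed.

Lemma net_row_carry l i : (l < depth)%N -> (i < d)%N -> net_row l i = ([:: (i, 1)], 0).
Proof. by move=> ld id; rewrite /net_row ltn_eqF // id. Qed.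

Lemma net_row_clip k i : (k <= d.-1)%N -> (d <= i)%N ->
  net_row (k * block).+1 i =
  if i == d then (prod_src k, 0) else if i == d.+1 then (prod_src k, -1) else ([::], 0).
Proof.
move=> kd di; rewrite /net_row ltn_eqF; last by rewrite /depth !ltnS leq_mul2r kd orbT.
by rewrite ltnNge di /= mulnK // modnMl.
Qed.

Lemma net_row_step k s c e : (k < d.-1)%N -> (s <= m)%N -> (c < 3)%N -> (e < 3)%N ->
  net_row (k * block + s).+2 (chan c e) =
  (if s == 0%N then chan_src k c else sq_src s c e, role_bias e).
Proof.
move=> kd sm c3 e3; rewrite /net_row /chan ltn_eqF; last first.
  have : (k.+1 * block <= d.-1 * block)%N by rewrite leq_mul2r kd orbT.
  by rewrite /depth mulSn /block; lia.
have sb : (s.+1 < block)%N by rewrite /block !ltnS.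
rewrite (_ : (k * block + s).+2.-1 = k * block + s.+1)%N; last by rewrite addnS.
rewrite divnMDl // modnMDl (divn_small sb) (modn_small sb) addn0 /=.
rewrite -addnA ltnNge leq_addr /= addKn divnMDl // modnMDl.
by rewrite (divn_small e3) (modn_small e3) addn0 c3.
Qed.

Lemma net_row_bound l i :
  \sum_(p <- (net_row l i).1) `|p.2| <= 7 /\ `|(net_row l i).2| <= 1.
Proof.
have half : `|1 / 2 : R| = 1 / 2 by rewrite ger0_norm //; lra.
have sq_bound s c e : \sum_(p <- sq_src s c e) `|p.2| <= 7.
  have t0 : 0 <= (4 ^+ s : R)^-1 by rewrite invr_ge0 exprn_ge0.
  have t1 : (4 ^+ s : R)^-1 <= 1 by rewrite invf_le1 ?exprn_gt0 // exprn_ege1 // ler1n.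
  rewrite /sq_src; case: ifP => _; rewrite !big_cons big_nil /= ?normrN ?normr1.
    by rewrite !ger0_norm ?mulr_ge0 //; lra.
  by rewrite !ger0_norm //; lra.
have bias_bound e : `|role_bias e| <= 1.
  by rewrite /role_bias; case: ifP => _; rewrite ?normrN ?half ?normr0; lra.
rewrite /net_row /prod_src /chan_src; repeat case: ifP => _.
all: split; rewrite ?bias_bound ?sq_bound ?normr0 ?normrN ?normr1 //=.
all: try case: (_ %/ _)%N => [|[|?]].
all: by rewrite ?big_cons big_nil /= ?normrN ?normr1 ?normr_nat ?half; lra.
Qed.

Lemma net_weight_bounded (C : R) : 7 <= C -> fnn_weight_bounded d W depth net_w net_b C.
Proof.
move=> C7 l _ i _; have [w7 b1] := net_row_bound l i.
split=> [|j _]; first by rewrite /net_b; lra.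
apply: le_trans (ler_norm_sum _ _ _) _; apply: le_trans C7; apply: le_trans w7.
by apply: ler_sum => p _; case: ifP; rewrite ?normr0.
Qed.

Variable x : nat -> R.
Hypothesis x01 : forall i, (i < d)%N -> 0 <= x i <= 1.
Local Notation H := (fnn_hidden d W depth net_w net_b x).

Lemma hidden_row l i src b : net_row l.+1 i = (src, b) ->
  all (fun p => p.1 < layer_dim d W depth l)%N src ->
  H l.+1 i = relu (\sum_(p <- src) p.2 * H l p.1 + b).
Proof. by move=> row src_lt; rewrite /= /net_w /net_b sum_sparse row. Qed.

Lemma hidden_carry l i : (l < depth)%N -> (i < d)%N -> H l i = x i.
Proof.
elim: l => [//|l IH] ld id.
rewrite (hidden_row (net_row_carry ld id)) /=; last first.
  case: l {IH} ld => [|l] ld; first by rewrite /= /layer_dim eqxx andbT.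
  by rewrite /= layer_dim_hidden ?andbT //; lia.
by rewrite big_seq1 mul1r addr0 IH ?(ltnW ld) // ger0_relu //; case/andP: (x01 id).
Qed.

Local Notation prod_x k := (prod_approx (polarize (sq_approx m)) x k).

Definition chan_input (k c : nat) : R :=
  if c == 0%N then (clip01 (prod_x k) + x k.+1) / 2
  else if c == 1%N then clip01 (prod_x k) else x k.+1.

Definition role_value (s : nat) (z : R) (e : nat) : R :=
  if e == 0%N then iter s hat z
  else if e == 1%N then relu (iter s hat z - 1/2) else sq_approx s z.

Definition clip_inv k :=
  H (k * block).+1 d = relu (prod_x k) /\ H (k * block).+1 d.+1 = relu (prod_x k - 1).

Definition step_inv k s := forall c e, (c < 3)%N -> (e < 3)%N ->
  H (k * block + s).+2 (chan c e) = role_value s (chan_input k c) e.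

Lemma chan_input_in01 k c : (k < d.-1)%N -> 0 <= chan_input k c <= 1.
Proof.
move=> kd; have /andP[x0 x1] : 0 <= x k.+1 <= 1 by apply: x01; lia.
have /andP[p0 p1] := clip01_in01 (prod_x k).
by rewrite /chan_input; case: ifP => _; [|case: ifP => _]; apply/andP; split; lra.
Qed.

Lemma clip_inv0 : clip_inv 0.
Proof.
have ld1 : all (fun p => p.1 < layer_dim d W depth 0)%N (prod_src 0).
  by rewrite /= /layer_dim eqxx andbT; lia.
have := net_row_clip (leq0n d.-1) (leqnn d); rewrite mul0n eqxx => row_d.
have := net_row_clip (leq0n d.-1) (leqnSn d); rewrite mul0n gtn_eqF // eqxx => row_d1.
rewrite /clip_inv mul0n (hidden_row row_d ld1) (hidden_row row_d1 ld1).
by rewrite !big_seq1 mul1r addr0.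
Qed.

Lemma step_inv0 k : (k < d.-1)%N -> clip_inv k -> step_inv k 0.
Proof.
move=> kd [clip_d clip_d1] c e c3 e3.
have kd1 : (k.+1 < d)%N by lia.
have kb := leq_mul (ltnW kd) (leqnn block).
have hk : H (k * block).+1 k.+1 = x k.+1 by rewrite hidden_carry // /depth; lia.
rewrite (hidden_row (net_row_step kd (leq0n m) c3 e3)) /= addn0; last first.
  rewrite layer_dim_hidden; last by rewrite /depth; lia.
  by case: c c3 => [|[|[|c]]] //= _; rewrite ?andbT; lia.
have -> : \sum_(p <- chan_src k c) p.2 * H (k * block).+1 p.1 = chan_input k c.
  move: clip_d clip_d1 hk; move: (H _) => h clip_d clip_d1 hk.
  by case: c c3 => [|[|[|c]]] // _;
    rewrite /chan_input /= !big_cons big_nil /= ?clip_d ?clip_d1 ?hk /clip01; ring.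
have /andP[z0 _] := chan_input_in01 c kd.
by rewrite /role_bias /role_value; case: e e3 => [|[|[|e]]] //= _; rewrite ?addr0 // ger0_relu.
Qed.

Lemma step_invS k s : (k < d.-1)%N -> (s < m)%N -> step_inv k s -> step_inv k s.+1.
Proof.
move=> kd sm IH c e c3 e3.
rewrite (hidden_row (net_row_step kd sm c3 e3)); last first.
  rewrite layer_dim_hidden; last first.
    by have := leq_mul kd (leqnn block); rewrite /depth /block; lia.
  by rewrite /sq_src /chan; case: ifP => _ /=; rewrite ?andbT; lia.
rewrite -addSnnS.
have := IH c 0%N c3 isT; have := IH c 1%N c3 isT; have := IH c 2%N c3 isT.
move: (H _) => h v2 v1 v0.
have /andP[u0 u1] := iter_hat_in01 s (chan_input_in01 c kd).
move: v0 v1 v2 u0 u1; rewrite /role_value /=; set z := chan_input k c; set u := iter s hat z.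
move=> v0 v1 v2 u0 u1.
have hat_u : 2 * u + -4 * relu (u - 1/2) = hat u by rewrite /hat (ger0_relu u0); ring.
rewrite /sq_src /role_bias.
case: e e3 => [|[|[|e]]] //= _; rewrite !big_cons big_nil v0 v1 ?v2 !addr0 ?hat_u //.
  by rewrite ger0_relu //; case/andP: (hat_in01 (iter_hat_in01 s (chan_input_in01 c kd))).
have /andP[+ _] := sq_approx_err s.+1 (chan_input_in01 c kd); rewrite subr_ge0 => sq_ge.
rewrite (_ : 1 * _ + _ = sq_approx s.+1 z); last by rewrite /= -hat_u; ring.
by rewrite ger0_relu //; apply: le_trans sq_ge; exact: sqr_ge0.
Qed.

Lemma clip_invS k : (k < d.-1)%N -> step_inv k m -> clip_inv k.+1.
Proof.
move=> kd IH.
have kb := leq_mul kd (leqnn block).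
rewrite /clip_inv (_ : (k.+1 * block).+1 = (k * block + m).+3); last first.
  by rewrite mulSn /block; lia.
have src_lt : all (fun p => p.1 < layer_dim d W depth (k * block + m).+2)%N (prod_src k.+1).
  by rewrite layer_dim_hidden /= /chan ?andbT; rewrite /depth /block in kb *; lia.
have row (i : nat) : (d <= i)%N ->
    net_row (k * block + m).+3 i = if i == d then (prod_src k.+1, 0)
      else if i == d.+1 then (prod_src k.+1, -1) else ([::], 0).
  by move=> di; rewrite -(net_row_clip kd di) mulSn /block; congr net_row; lia.
have := row d (leqnn d); rewrite eqxx => row_d.
have := row d.+1 (leqnSn d); rewrite gtn_eqF // eqxx => row_d1.
rewrite (hidden_row row_d src_lt) (hidden_row row_d1 src_lt).
have := IH 0%N 2%N isT isT; have := IH 1%N 2%N isT isT; have := IH 2%N 2%N isT isT.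
move: (H _) => h v2 v1 v0.
rewrite /= !big_cons big_nil /= v0 v1 v2 /role_value /= !addr0.
suff -> : 2 * sq_approx m (chan_input k 0) + (- (1 / 2) * sq_approx m (chan_input k 1)
    + - (1 / 2) * sq_approx m (chan_input k 2)) = prod_x k.+1 by [].
by rewrite /= /polarize /chan_input /=; field.
Qed.

Lemma clip_inv_all k : (k <= d.-1)%N -> clip_inv k.
Proof.
elim: k => [_|k IH kd]; first exact: clip_inv0.
apply: clip_invS => //.
have steps s : (s <= m)%N -> step_inv k s.
  elim: s => [_|s IHs sm]; first exact: step_inv0 (IH (ltnW kd)).
  exact: step_invS (IHs (ltnW sm)).
exact: steps.
Qed.

Lemma fnn_eval_net : fnn_eval d W depth net_w net_b x = clip01 (prod_x d.-1).
Proof.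
have [clip_d clip_d1] := clip_inv_all (leqnn d.-1).
have row : net_row depth 0 = ([:: (d, 1); (d.+1, -1)], 0) by rewrite /net_row eqxx.
rewrite /fnn_eval /net_w /net_b (_ : depth.-1 = (d.-1 * block).+1) //.
rewrite sum_sparse row; last first.
  by rewrite layer_dim_hidden /depth //= andbT; lia.
by rewrite !big_cons big_nil clip_d clip_d1 /clip01 /=; ring.
Qed.

Lemma net_approx_err (eps : R) : 0 < eps -> d%:R / eps <= 2 ^+ m ->
  `|fnn_eval d W depth net_w net_b x - \prod_(i < d) x i| <= eps.
Proof.
move=> eps0 dm; rewrite fnn_eval_net.
have mul_err (c y : R) : 0 <= c <= 1 -> 0 <= y <= 1 ->
    `|polarize (sq_approx m) c y - c * y| <= 2 * (4 ^+ m.+1)^-1.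
  by apply: polarize_err => z; apply: sq_approx_err.
have x01' i : (i <= d.-1)%N -> 0 <= x i <= 1 by move=> id; apply: x01; lia.
have := prod_approx_err mul_err x01'; rewrite prednK ?(ltnW d_gt1) // => /le_trans; apply.
have P1 : 1 <= (2 : R) ^+ m by rewrite exprn_ege1 // ler1n.
rewrite (_ : 4 ^+ m.+1 = 4 * (2 ^+ m * 2 ^+ m)); last by rewrite exprS -exprMn -natrM.
rewrite ler_pdivrMr // in dm; move: P1 dm; set P := (2 : R) ^+ m => P1 dm.
have d1 : d.-1%:R <= d%:R :> R by rewrite ler_nat leq_pred.
have slack : 0 <= P * eps * (2 * P - 1) by rewrite !mulr_ge0 //; lra.
rewrite (_ : _ * (2 / _) = d.-1%:R / (2 * P * P)); last by field; lra.
by rewrite ler_pdivrMr; nra.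
Qed.

End Network.

Lemma ln2_ge_half (R : realType) : 1 / 2 <= ln (2 : R).
Proof.
have e_half : expR (1 / 2) <= (2 : R).
  have := expR_ge1Dx (- (1 / 2) : R); rewrite expRN.
  have := expR_gt0 (1 / 2 : R); move: (expR _) => E E0.
  by move=> /(ler_wpM2l (ltW E0)); rewrite mulfV ?gt_eqF //; lra.
by rewrite -[X in X <= _](expRK (1 / 2)) ler_ln ?posrE ?expR_gt0.
Qed.

Lemma pow2_log_bound (R : realType) (y : R) : 0 < y ->
  exists m : nat, y <= 2 ^+ m /\ m%:R <= 1 + 2 * Num.max 0 (ln y).
Proof.
move=> y0; have [y1|y1] := lerP y 1.
  by exists 0%N; rewrite expr0 y1 ler_wpDr ?mulr_ge0 ?le_max ?lexx.
have [|m ym m_min] := ex_minnP (_ : exists n, y <= 2 ^+ n).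
  by exists (Num.Def.archi_bound y); apply: ltW; apply: upper_nthrootP.
exists m; split => //.
have m1 : (1 <= m)%N by case: m ym {m_min} => //; rewrite expr0; lra.
have ym1 : 2 ^+ m.-1 < y.
  by rewrite ltNge; apply/negP => /m_min; lia.
have l2 := ln2_ge_half R.
rewrite -ltr_ln ?posrE ?exprn_gt0 // lnXn // -[_ *+ m.-1]mulr_natr in ym1.
rewrite (_ : m%:R = m.-1%:R + 1); last by rewrite natr1 prednK.
have : 0 <= m.-1%:R :> R by [].
have : ln y <= Num.max 0 (ln y) by rewrite le_max lexx orbT.
by nra.
Qed.

Lemma ln_opp_le_ln_div (R : realType) (Q eps : R) : 2 <= Q -> 0 < eps ->
  - ln eps <= ln (Q / (2 * eps)).
Proof.
move=> Q2 eps0; rewrite -lnV ?posrE // ler_ln ?posrE ?invr_gt0 ?divr_gt0 ?mulr_gt0 //; try lra.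
by rewrite invfM mulrA ler_peMl ?invr_ge0 ?(ltW eps0) // ler_pdivlMr //; lra.
Qed.

Lemma mtp_a_gt0 d : (1 < d)%N -> (0 < mtp_a d)%N.
Proof. by move=> d1; rewrite up_log_gt0 d1. Qed.

Lemma mtp_width_ge d : (1 < d)%N -> (d + 9 <= 21 * 2 ^ (mtp_a d).-1)%N.
Proof.
move=> d1; have := @up_logP 2 d isT; have := mtp_a_gt0 d1; rewrite /mtp_a.
by case: (up_log 2 d) => // a _; rewrite expnS /=; have := expn_gt0 2 a; lia.
Qed.

Lemma mtp_numer_ge2 d : (1 < d)%N -> (2 <= 3 ^ mtp_a d - 1)%N.
Proof.
move/mtp_a_gt0; case: (mtp_a d) => // a _.
by rewrite expnS; have := expn_gt0 3 a; lia.
Qed.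

Definition mtp_const (R : realType) (d : nat) : R := 2 + 5 * d%:R + 2 * (d%:R * ln d%:R).

Lemma mtp_const_ge7 (R : realType) d : (1 < d)%N -> 7 <= mtp_const R d.
Proof.
move=> d1; have D2 : 2 <= d%:R :> R by rewrite ler_nat.
have : 0 <= d%:R * ln d%:R :> R by rewrite mulr_ge0 ?ln_ge0 //; lra.
by rewrite /mtp_const; lra.
Qed.

Lemma depth_bound (R : realType) (d m : nat) (eps u : R) :
  (1 <= d)%N -> 0 < eps -> 1 <= u -> - ln eps <= u ->
  m%:R <= 1 + 2 * Num.max 0 (ln (d%:R / eps)) -> (depth d m)%:R <= mtp_const R d * u.
Proof.
move=> d1 eps0 u1 eps_u m_le.
have D1 : 1 <= d%:R :> R by rewrite ler1n.
have lnD : 0 <= ln d%:R :> R by rewrite ln_ge0.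
have ln_ratio : Num.max 0 (ln (d%:R / eps)) <= ln d%:R + u.
  have D0 : 0 < d%:R :> R by lra.
  by rewrite ge_max lnM ?posrE ?invr_gt0 // lnV ?posrE //; apply/andP; split; lra.
rewrite /depth /block /mtp_const -addn2 natrD natrM -addn2 natrD.
rewrite (_ : d.-1%:R = d%:R - 1); last by rewrite -subn1 natrB.
have : 0 <= ln d%:R * d%:R * (u - 1) by rewrite !mulr_ge0 //; lra.
by nra.
Qed.

Unset Implicit Arguments.

Theorem lemma13 (R : realType) (d : nat) (hd : (1 < d)%N) :
  exists C : R, forall eps : R, 0 < eps ->
    ((1 < mtp_a d)%N ->
       eps <= (3 ^ mtp_a d - 1)%N%:R / (3 ^ (mtp_a d).-1 - 1)%N%:R) ->
    exists (L : nat) (w : nat -> nat -> nat -> R) (b : nat -> nat -> R),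
      [/\ (1 <= L)%N,
          L%:R <= C * Num.max 1 (ln ((3 ^ mtp_a d - 1)%N%:R / (2 * eps))),
          fnn_weight_bounded d (21 * 2 ^ (mtp_a d).-1) L w b C &
          forall x : nat -> R, (forall i, (i < d)%N -> 0 <= x i <= 1) ->
            `|fnn_eval d (21 * 2 ^ (mtp_a d).-1) L w b x - \prod_(i < d) x i|
              <= eps].
Proof.
(* The construction needs no upper bound on [eps]. *)
exists (mtp_const R d) => eps eps0 _.
set u := Num.max 1 _; have u1 : 1 <= u by rewrite le_max lexx.
have eps_u : - ln eps <= u.
  have Q2 : 2 <= (3 ^ mtp_a d - 1)%:R :> R by rewrite ler_nat mtp_numer_ge2.
  by apply: le_trans (ln_opp_le_ln_div Q2 eps0) _; rewrite le_max lexx orbT.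
have D0 : 0 < d%:R :> R by rewrite ltr0n ltnW.
have [m [dm m_le]] := pow2_log_bound (divr_gt0 D0 eps0).
exists (depth d m), (net_w R d m), (net_b R d m); split => //.
- exact: depth_bound (ltnW hd) eps0 u1 eps_u m_le.
- exact/net_weight_bounded/mtp_const_ge7.
- by move=> x x01; have := net_approx_err hd (mtp_width_ge hd) x01 eps0 dm.
Qed.
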